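(* Let $\mathcal{H}_W,\mathcal{H}_A,\mathcal{H}_Y$ be finite-dimensional Hilbert spaces, let $|\phi\rangle\in\mathcal{H}_A$ be a unit vector, and let $\mathcal{S}_3:\mathrm{CPTP}(\mathcal{H}_W\otimes\mathcal{H}_A,\mathcal{H}_Y)\to\mathrm{CPTP}(\mathcal{H}_W,\mathcal{H}_Y)$ be the supermap $\mathcal{S}_3(\mathcal{N})(\rho)=\mathcal{N}(\rho\otimes|\phi\rangle\langle\phi|)$. Define the maps on operators on $\mathcal{H}_A$: $\mathcal{J}_1(\sigma)=|\phi\rangle\langle\phi|\sigma|\phi\rangle\langle\phi|$ and $\mathcal{J}_0(\sigma)=(\mathbb{1}_A-|\phi\rangle\langle\phi|)\sigma(\mathbb{1}_A-|\phi\rangle\langle\phi|)$, and let $\mathcal{J}=\mathcal{J}_1+\mathcal{J}_0$. Let $\Gamma\in\mathrm{CPTP}(\mathcal{H}_W\otimes\mathcal{H}_A,\mathcal{H}_Y)$ and let $\tau$ be a fixed density operator on $\mathcal{H}_W$. Define, for $\mathcal{M}\in\mathrm{CPTP}(\mathcal{H}_W,\mathcal{H}_Y)$, $$\mathcal{R}(\mathcal{M}):=\mathcal{M}\otimes(\mathrm{Tr}_A\circ\mathcal{J}_1)+\mathrm{Tr}[\mathcal{M}(\tau)]\,\Gamma\circ(\mathcal{I}_W\otimes\mathcal{J}_0),$$ i.e. $\mathcal{R}(\mathcal{M})(\rho_W\otimes\sigma_A)=\mathrm{Tr}[\mathcal{J}_1(\sigma_A)]\,\mathcal{M}(\rho_W)+\mathrm{Tr}[\mathcal{M}(\tau)]\,\Gamma(\rho_W\otimes\mathcal{J}_0(\sigma_A))$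 extended linearly. Then $\mathcal{R}$ is a superchannel from $\mathrm{CPTP}(\mathcal{H}_W,\mathcal{H}_Y)$ to $\mathrm{CPTP}(\mathcal{H}_W\otimes\mathcal{H}_A,\mathcal{H}_Y)$. Moreover, if $\Gamma\circ(\mathcal{I}_W\otimes\mathcal{J})=\Gamma$, then $\mathcal{R}(\mathcal{S}_3(\Gamma))=\Gamma$.
   Context: $\mathrm{CPTP}(\mathcal{H},\mathcal{K})$ denotes the set of quantum channels from operators on $\mathcal{H}$ to operators on $\mathcal{K}$; $\mathcal{I}_W$ is the identity channel on $\mathcal{H}_W$. A superchannel is a linear map on linear maps sending channels to channels that can be realized as $\mathcal{N}\mapsto\mathcal{E}_{\rm post}\circ(\mathcal{N}\otimes\mathcal{I}_M)\circ\mathcal{E}_{\rm pre}$ for some ancilla system $M$ and quantum channels $\mathcal{E}_{\rm pre},\mathcal{E}_{\rm post}$ (i.e. it is deterministically implementable given one black-box use of the input channel). *)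

From HB Require Import structures.
From mathcomp Require Import all_boot all_order all_algebra.
From mathcomp Require Export mxtens.
Set Implicit Arguments. Unset Strict Implicit. Unset Printing Implicit Defensive.
Import Order.TTheory GRing.Theory Num.Theory.
Local Open Scope ring_scope.

Section QDefs.
Variable C : numClosedFieldType.

Definition adjmx m n (A : 'M[C]_(m, n)) : 'M[C]_(n, m) := (map_mx (fun x => x^*) A)^T.

Definition psd n (A : 'M[C]_n) : Prop :=
  forall v : 'cV[C]_n, 0 <= (adjmx v *m A *m v) 0 0.

Definition density n (rho : 'M[C]_n) : Prop := psd rho /\ \tr rho = 1.

(* Tensor product f (x) g of two maps on operators, defined as the linear
   extension of  E_ij (x) E_ab |-> f(E_ij) (x) g(E_ab)
   (Kronecker convention of mxtens: first factor is the major index). *)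
Definition tmap n m p q (f : 'M[C]_n -> 'M[C]_m) (g : 'M[C]_p -> 'M[C]_q)
  (X : 'M[C]_(n * p)) : 'M[C]_(m * q) :=
  \sum_(i < n) \sum_(j < n) \sum_(a < p) \sum_(b < p)
     X (mxtens_index (i, a)) (mxtens_index (j, b)) *:
       (f (delta_mx i j) *t g (delta_mx a b)).

(* Tensor product f (x) g where g is scalar-valued (output space C = trivial
   one-dimensional system), identified with a map into 'M_m. *)
Definition tmap_scal n m p (f : 'M[C]_n -> 'M[C]_m) (g : 'M[C]_p -> C)
  (X : 'M[C]_(n * p)) : 'M[C]_m :=
  \sum_(i < n) \sum_(j < n) \sum_(a < p) \sum_(b < p)
     X (mxtens_index (i, a)) (mxtens_index (j, b)) *:
       (g (delta_mx a b) *: f (delta_mx i j)).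

Definition idmap n : 'M[C]_n -> 'M[C]_n := fun X => X.

Definition CP n m (f : 'M[C]_n -> 'M[C]_m) : Prop :=
  forall k (X : 'M[C]_(n * k)), psd X -> psd (tmap f (@idmap k) X).

Definition TP n m (f : 'M[C]_n -> 'M[C]_m) : Prop :=
  forall X, \tr (f X) = \tr X.

Definition channel n m (f : 'M[C]_n -> 'M[C]_m) : Prop :=
  linear f /\ CP f /\ TP f.

Definition superchannel n m n' m'
  (S : ('M[C]_n -> 'M[C]_m) -> ('M[C]_n' -> 'M[C]_m')) : Prop :=
  exists k (Epre : 'M[C]_n' -> 'M[C]_(n * k)) (Epost : 'M[C]_(m * k) -> 'M[C]_m'),
    [/\ channel Epre, channel Epost &
        forall N : 'M[C]_n -> 'M[C]_m, linear N ->
          forall X, S N X = Epost (tmap N (@idmap k) (Epre X))].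

Definition projphi dA (phi : 'cV[C]_dA) : 'M[C]_dA := phi *m adjmx phi.

Definition J1 dA (phi : 'cV[C]_dA) (s : 'M[C]_dA) : 'M[C]_dA :=
  projphi phi *m s *m projphi phi.

Definition J0 dA (phi : 'cV[C]_dA) (s : 'M[C]_dA) : 'M[C]_dA :=
  (1%:M - projphi phi) *m s *m (1%:M - projphi phi).

Definition Jmap dA (phi : 'cV[C]_dA) (s : 'M[C]_dA) : 'M[C]_dA :=
  J1 phi s + J0 phi s.

Definition S3 dW dA dY (phi : 'cV[C]_dA) (N : 'M[C]_(dW * dA) -> 'M[C]_dY)
  : 'M[C]_dW -> 'M[C]_dY :=
  fun rho => N (rho *t projphi phi).

Definition Rsuper dW dA dY (phi : 'cV[C]_dA) (Gamma : 'M[C]_(dW * dA) -> 'M[C]_dY)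
  (tau : 'M[C]_dW) (M : 'M[C]_dW -> 'M[C]_dY) : 'M[C]_(dW * dA) -> 'M[C]_dY :=
  fun X => tmap_scal M (fun s => \tr (J1 phi s)) X
           + \tr (M tau) *: Gamma (tmap (@idmap dW) (J0 phi) X).

End QDefs.

(* R(M) is realized with the ancilla C + H_W (x) H_A.  The pre-channel sends X to
   <phi|X|phi>_A (x) |0><0| + tau (x) (I (x) J0)(X), the second term placed in the
   H_W (x) H_A summand; after N (x) I the post-channel keeps the |0><0| block and
   applies Gamma to the partial trace over H_Y of the other block.  Both maps are
   sums and composites of Kraus conjugations (Z |-> tau (x) Z through the
   spectral decomposition of tau), and they preserve the trace because
   Tr <phi|X|phi>_A + Tr (I (x) J0)(X) = Tr X.  For the identity, note that
   S3(Gamma)(<phi|X|phi>_A) = Gamma((I (x) J1) X) and Tr S3(Gamma)(tau) = 1. *)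

From HB Require Import structures.
From mathcomp Require Import all_boot all_order all_algebra.
From mathcomp Require Import mxtens ring spectral sesquilinear.
From Stdlib Require Import FunctionalExtensionality.
Set Implicit Arguments. Unset Strict Implicit. Unset Printing Implicit Defensive.
Import Order.TTheory GRing.Theory Num.Theory.
Local Open Scope ring_scope.

Section Adjoint.
Variable C : numClosedFieldType.

Lemma adjmxE m n (A : 'M[C]_(m, n)) i j : adjmx A i j = (A j i)^*.
Proof. by rewrite !mxE. Qed.

Lemma adjmxK m n (A : 'M[C]_(m, n)) : adjmx (adjmx A) = A.
Proof. by apply/matrixP => i j; rewrite !mxE conjCK. Qed.

Lemma adjmxM m n p (A : 'M[C]_(m, n)) (B : 'M[C]_(n, p)) :
  adjmx (A *m B) = adjmx B *m adjmx A.
Proof. by rewrite /adjmx map_mxM trmx_mul. Qed.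

Lemma adjmxD m n (A B : 'M[C]_(m, n)) : adjmx (A + B) = adjmx A + adjmx B.
Proof. by rewrite /adjmx map_mxD linearD. Qed.

Lemma adjmxB m n (A B : 'M[C]_(m, n)) : adjmx (A - B) = adjmx A - adjmx B.
Proof. by rewrite /adjmx map_mxB linearB. Qed.

Lemma adjmxZ m n c (A : 'M[C]_(m, n)) : adjmx (c *: A) = c^* *: adjmx A.
Proof. by rewrite /adjmx map_mxZ linearZ. Qed.

Lemma adjmx1 n : adjmx (1%:M : 'M[C]_n) = 1%:M.
Proof. by rewrite /adjmx map_mx1 trmx1. Qed.

Lemma adjmx_delta m n i j : adjmx (delta_mx i j : 'M[C]_(m, n)) = delta_mx j i.
Proof. by rewrite /adjmx map_delta_mx trmx_delta. Qed.

Lemma adjmx_tens m n p q (A : 'M[C]_(m, n)) (B : 'M[C]_(p, q)) :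
  adjmx (A *t B) = adjmx A *t adjmx B.
Proof. by rewrite /adjmx map_mxT trmx_tens. Qed.

Lemma mulmx_adj_entry m n (K : 'M[C]_(m, n)) (X : 'M[C]_n) r r' :
  (K *m X *m adjmx K) r r' = \sum_c \sum_c' K r c * X c c' * (K r' c')^*.
Proof.
rewrite mxE exchange_big; apply: eq_bigr => c' _.
by rewrite mxE big_distrl; apply: eq_bigr => c _; rewrite !mxE.
Qed.

End Adjoint.

Section Psd.
Variable C : numClosedFieldType.

Lemma psd0 n : psd (0 : 'M[C]_n).
Proof. by move=> v; rewrite mulmx0 mul0mx mxE. Qed.

Lemma psdD n (A B : 'M[C]_n) : psd A -> psd B -> psd (A + B).
Proof. by move=> pA pB v; rewrite mulmxDr mulmxDl mxE addr_ge0. Qed.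

Lemma psdZ n c (A : 'M[C]_n) : 0 <= c -> psd A -> psd (c *: A).
Proof. by move=> c0 pA v; rewrite -scalemxAr -scalemxAl mxE mulr_ge0. Qed.

Lemma psd_mul_adj m n (K : 'M[C]_(m, n)) (A : 'M[C]_n) :
  psd A -> psd (K *m A *m adjmx K).
Proof. by move=> pA v; have := pA (adjmx K *m v); rewrite adjmxM adjmxK !mulmxA. Qed.

Lemma form_delta n (A : 'M[C]_n) i j :
  (adjmx (delta_mx i 0 : 'cV[C]_n) *m A *m (delta_mx j 0 : 'cV[C]_n)) 0 0 = A i j.
Proof. by rewrite adjmx_delta -rowE -colE !mxE. Qed.

(* Polarization: the cross term [c A_ji + c^* A_ij] of the real quadratic form
   at [e_j + c e_i] is real; taking [c = 1] and [c = 'i] gives [A_ij^* = A_ji]. *)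
Lemma psd_adjmx n (A : 'M[C]_n) : psd A -> adjmx A = A.
Proof.
move=> pA; apply/matrixP => i j; rewrite adjmxE.
pose q (v : 'cV[C]_n) : C := (adjmx v *m A *m v) 0 0.
have q_real v : (q v)^* = q v by apply/conj_Creal/ger0_real/pA.
pose x : C := A j i; pose y : C := A i j.
have e00D (X Y : 'M[C]_1) : (X + Y) 0 0 = X 0 0 + Y 0 0 by rewrite mxE.
have e00Z c (X : 'M[C]_1) : (c *: X) 0 0 = c * X 0 0 by rewrite mxE.
have cross_real c : c^* * c = 1 -> (c * x + c^* * y)^* = c * x + c^* * y.
  move=> cc.
  have <- : q (delta_mx j 0 + c *: delta_mx i 0) - q (delta_mx j 0) - q (delta_mx i 0)
            = c * x + c^* * y.
    rewrite /q adjmxD adjmxZ !mulmxDl !mulmxDr -!scalemxAl -!scalemxAr.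
    rewrite !e00D !e00Z !form_delta mulrA cc /x /y; ring.
  by rewrite !rmorphB; congr (_ - _ - _); apply: q_real.
have ci : ('i : C)^* * 'i = 1 by rewrite conjCi mulNr -expr2 sqrCi opprK.
have re : x^* + y^* = x + y.
  by have := cross_real 1; rewrite conjC1 !mul1r rmorphD; apply.
have im : - 'i * x^* - - 'i * y^* = 'i * x - 'i * y.
  by have := cross_real 'i ci; rewrite conjCi mulNr rmorphB !rmorphM -conjCi; apply.
have i0 : ('i : C) != 0 by rewrite neq0Ci.
have im' : y^* - x^* = x - y.
  apply: (mulfI i0); transitivity (- 'i * x^* - - 'i * y^*); first ring.
  by rewrite im; ring.
have two0 : (2 : C) != 0 by rewrite pnatr_eq0.
apply: (mulfI two0); transitivity ((x^* + y^*) - (y^* - x^*)); first ring.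
by rewrite re im' /x /y; ring.
Qed.

Lemma psd_spectral n (A : 'M[C]_n) : psd A ->
  exists (u : 'I_n -> 'cV[C]_n) (d : 'I_n -> C),
    (forall l, 0 <= d l) /\ A = \sum_l d l *: (u l *m adjmx (u l)).
Proof.
move=> pA; have adjA := psd_adjmx pA.
have adjE m p (M : 'M[C]_(m, p)) : (M ^t*)%sesqui = adjmx M by rewrite -map_trmx.
have nA : A \is normalmx by rewrite qualifE adjE adjA.
have eA := orthomx_spectralP nA.
set P := spectralmx A in eA; set sp := spectral_diag A in eA.
have uP : P \is unitarymx := spectral_unitarymx A.
rewrite invmx_unitary // adjE in eA.
have PP : P *m adjmx P = 1%:M by rewrite -adjE; apply/unitarymxP.
exists (fun l => adjmx (row l P)), (fun l => sp 0 l); split.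
  move=> l; have <- : (P *m A *m adjmx P) l l = sp 0 l.
    by rewrite eA !mulmxA PP mul1mx -mulmxA PP mulmx1 mxE eqxx mulr1n.
  have := pA (adjmx (row l P)); rewrite adjmxK.
  suff -> : (P *m A *m adjmx P) l l = (row l P *m A *m adjmx (row l P)) 0 0 by [].
  rewrite -!row_mul mxE [in RHS]mxE [RHS]mxE; apply: eq_bigr => k _.
  by congr (_ * _); rewrite !mxE.
rewrite {1}eA; apply/matrixP => i j.
rewrite mul_mx_diag !mxE summxE; apply: eq_bigr => k _.
by rewrite !mxE big_ord1 !mxE conjCK; ring.
Qed.

End Psd.

Section TensorIndex.
Variable C : numClosedFieldType.
Notation idx := mxtens_index.

Lemma sum_mxtens_index (V : nmodType) m n (F : 'I_(m * n) -> V) :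
  \sum_(k < m * n) F k = \sum_(i < m) \sum_(j < n) F (idx (i, j)).
Proof.
rewrite pair_big (reindex (@mxtens_index m n)) /=; last first.
  by exists (@mxtens_unindex m n) => x _; [apply: mxtens_indexK | apply: mxtens_unindexK].
by apply: eq_bigr => -[i j].
Qed.

Lemma eq_mxtens_index m n (x y : 'I_m * 'I_n) : (idx x == idx y) = (x == y).
Proof. exact: (can_eq (@mxtens_indexK m n)). Qed.

Lemma tensmx_delta m n p q (i : 'I_m) (j : 'I_n) (a : 'I_p) (b : 'I_q) :
  delta_mx i j *t delta_mx a b = delta_mx (idx (i, a)) (idx (j, b)) :> 'M[C]_(_, _).
Proof.
apply/matrixP => r c; case: (mxtens_indexP r) => i' a'; case: (mxtens_indexP c) => j' b'.
rewrite tensmxE !mxE !eq_mxtens_index !xpair_eqE.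
by case: (i' == i); case: (a' == a); case: (j' == j); case: (b' == b);
   rewrite ?mulr1 ?mulr0 ?mul0r.
Qed.

Lemma tensmx_sum_delta n p (X : 'M[C]_(n * p)) :
  X = \sum_(i < n) \sum_(j < n) \sum_(a < p) \sum_(b < p)
     X (idx (i, a)) (idx (j, b)) *: (delta_mx i j *t delta_mx a b).
Proof.
rewrite {1}(matrix_sum_delta X) sum_mxtens_index; apply: eq_bigr => i _.
under eq_bigr do rewrite sum_mxtens_index.
rewrite exchange_big; apply: eq_bigr => j _; apply: eq_bigr => a _.
by apply: eq_bigr => b _; rewrite tensmx_delta.
Qed.

Lemma tensmxDl m n p q (A A' : 'M[C]_(m, n)) (B : 'M[C]_(p, q)) :
  (A + A') *t B = A *t B + A' *t B.
Proof. by apply/matrixP => x y; rewrite !mxE mulrDl. Qed.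

Lemma tensmxDr m n p q (A : 'M[C]_(m, n)) (B B' : 'M[C]_(p, q)) :
  A *t (B + B') = A *t B + A *t B'.
Proof. by apply/matrixP => x y; rewrite !mxE mulrDr. Qed.

Lemma tensmxBr m n p q (A : 'M[C]_(m, n)) (B B' : 'M[C]_(p, q)) :
  A *t (B - B') = A *t B - A *t B'.
Proof. by apply/matrixP => x y; rewrite !mxE mulrBr. Qed.

Lemma tensmxZl m n p q c (A : 'M[C]_(m, n)) (B : 'M[C]_(p, q)) :
  (c *: A) *t B = c *: (A *t B).
Proof. by apply/matrixP => x y; rewrite !mxE mulrA. Qed.

Lemma tensmxZr m n p q c (A : 'M[C]_(m, n)) (B : 'M[C]_(p, q)) :
  A *t (c *: B) = c *: (A *t B).
Proof. by apply/matrixP => x y; rewrite !mxE mulrCA. Qed.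

Lemma tensmx_suml m n p q (I : Type) (r : seq I) (P : pred I)
    (F : I -> 'M[C]_(m, n)) (B : 'M[C]_(p, q)) :
  (\sum_(i <- r | P i) F i) *t B = \sum_(i <- r | P i) (F i *t B).
Proof.
apply/matrixP => x y; rewrite mxE !summxE big_distrl.
by apply: eq_bigr => i _; rewrite mxE.
Qed.

Lemma tensmx_sumr m n p q (I : Type) (r : seq I) (P : pred I)
    (F : I -> 'M[C]_(p, q)) (A : 'M[C]_(m, n)) :
  A *t (\sum_(i <- r | P i) F i) = \sum_(i <- r | P i) (A *t F i).
Proof.
apply/matrixP => x y; rewrite mxE !summxE big_distrr.
by apply: eq_bigr => i _; rewrite mxE.
Qed.

Lemma mxtrace_tens m n (A : 'M[C]_m) (B : 'M[C]_n) : \tr (A *t B) = \tr A * \tr B.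
Proof.
rewrite /mxtrace sum_mxtens_index mulr_suml; apply: eq_bigr => i _.
by rewrite mulr_sumr; apply: eq_bigr => a _; rewrite tensmxE.
Qed.

Lemma tensmx11 m n : (1%:M : 'M[C]_m) *t (1%:M : 'M[C]_n) = 1%:M.
Proof.
apply/matrixP => r c; case: (mxtens_indexP r) => i a; case: (mxtens_indexP c) => j b.
rewrite tensmxE !mxE eq_mxtens_index xpair_eqE.
by case: (i == j); case: (a == b); rewrite ?mulr1 ?mulr0 ?mul0r.
Qed.

End TensorIndex.

Section LinearMap.
Variables (C : numClosedFieldType) (n m : nat) (f : 'M[C]_n -> 'M[C]_m).
Hypothesis lf : linear f.

Lemma lin0 : f 0 = 0.
Proof. by apply: (@addrI _ (f 0)); rewrite addr0 -{1}(scale1r (f 0)) -lf scale1r addr0. Qed.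

Lemma linD u v : f (u + v) = f u + f v.
Proof. by have := lf 1 u v; rewrite !scale1r. Qed.

Lemma linZ a u : f (a *: u) = a *: f u.
Proof. by have := lf a u 0; rewrite !addr0 lin0 addr0. Qed.

Lemma lin_sum (I : Type) (r : seq I) (P : pred I) (F : I -> 'M[C]_n) :
  f (\sum_(i <- r | P i) F i) = \sum_(i <- r | P i) f (F i).
Proof. exact: (big_morph f linD lin0). Qed.

End LinearMap.

Lemma linear_mulmx_lr (C : numClosedFieldType) m n p q
    (K : 'M[C]_(m, n)) (L : 'M[C]_(p, q)) :
  linear (fun Y : 'M[C]_(n, p) => K *m Y *m L).
Proof. by move=> a u v /=; rewrite mulmxDr mulmxDl -scalemxAr -scalemxAl. Qed.

Section TensorMap.
Variable C : numClosedFieldType.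

Lemma linear_tmap n m p q (f : 'M[C]_n -> 'M[C]_m) (g : 'M[C]_p -> 'M[C]_q) :
  linear (tmap f g).
Proof.
move=> c X Y; rewrite /tmap scaler_sumr -big_split; apply: eq_bigr => i _.
do 3! (rewrite scaler_sumr -big_split; apply: eq_bigr => ? _).
by rewrite !mxE scalerDl scalerA.
Qed.

Lemma eq_tmap n m p q (f f' : 'M[C]_n -> 'M[C]_m) (g g' : 'M[C]_p -> 'M[C]_q) :
  f =1 f' -> g =1 g' -> tmap f g =1 tmap f' g'.
Proof. by move=> ef eg X; rewrite /tmap; do 4! (apply: eq_bigr => ? _); rewrite ef eg. Qed.

Lemma tmapDl n m p q (f f' : 'M[C]_n -> 'M[C]_m) (g : 'M[C]_p -> 'M[C]_q) X :
  tmap (fun Y => f Y + f' Y) g X = tmap f g X + tmap f' g X.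
Proof.
by rewrite /tmap; do 4! (rewrite -big_split; apply: eq_bigr => ? _); rewrite tensmxDl scalerDr.
Qed.

Lemma tmapDr n m p q (f : 'M[C]_n -> 'M[C]_m) (g g' : 'M[C]_p -> 'M[C]_q) X :
  tmap f (fun Y => g Y + g' Y) X = tmap f g X + tmap f g' X.
Proof.
by rewrite /tmap; do 4! (rewrite -big_split; apply: eq_bigr => ? _); rewrite tensmxDr scalerDr.
Qed.

Lemma tmapZl n m p q c (f : 'M[C]_n -> 'M[C]_m) (g : 'M[C]_p -> 'M[C]_q) X :
  tmap (fun Y => c *: f Y) g X = c *: tmap f g X.
Proof.
rewrite /tmap; do 4! (rewrite scaler_sumr; apply: eq_bigr => ? _).
by rewrite tensmxZl !scalerA mulrC.
Qed.

Lemma tmap_tens n m p (f : 'M[C]_n -> 'M[C]_m) (A : 'M[C]_n) (B : 'M[C]_p) :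
  linear f -> tmap f (@idmap C p) (A *t B) = f A *t B.
Proof.
move=> lf; rewrite /tmap /idmap [in RHS](matrix_sum_delta A) [in RHS](matrix_sum_delta B).
rewrite (lin_sum lf) tensmx_suml; apply: eq_bigr => i _.
rewrite (lin_sum lf) tensmx_suml; apply: eq_bigr => j _.
rewrite tensmx_sumr; apply: eq_bigr => a _.
rewrite tensmx_sumr; apply: eq_bigr => b _.
by rewrite tensmxE (linZ lf) tensmxZl tensmxZr scalerA.
Qed.

Lemma tmap_comp n m l p (f : 'M[C]_n -> 'M[C]_m) (g : 'M[C]_m -> 'M[C]_l) X :
  linear g ->
  tmap (fun Y => g (f Y)) (@idmap C p) X = tmap g (@idmap C p) (tmap f (@idmap C p) X).
Proof.
move=> lg; rewrite [X in tmap g _ X]/tmap [in LHS]/tmap.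
do 4! (rewrite (lin_sum (linear_tmap _ _)); apply: eq_bigr => ? _).
by rewrite (linZ (linear_tmap _ _)) tmap_tens.
Qed.

Lemma tmap_kraus_l n m p (K : 'M[C]_(m, n)) (X : 'M[C]_(n * p)) :
  tmap (fun Y => K *m Y *m adjmx K) (@idmap C p) X =
  (K *t 1%:M) *m X *m adjmx (K *t 1%:M).
Proof.
rewrite [in RHS](tensmx_sum_delta X) adjmx_tens adjmx1 /tmap.
do 4! (rewrite mulmx_sumr mulmx_suml; apply: eq_bigr => ? _).
by rewrite -scalemxAr -scalemxAl !tensmx_mul mul1mx mulmx1.
Qed.

Lemma tmap_kraus_r n m p (K : 'M[C]_(m, p)) (X : 'M[C]_(n * p)) :
  tmap (@idmap C n) (fun Y => K *m Y *m adjmx K) X =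
  (1%:M *t K) *m X *m adjmx (1%:M *t K).
Proof.
rewrite [in RHS](tensmx_sum_delta X) adjmx_tens adjmx1 /tmap.
do 4! (rewrite mulmx_sumr mulmx_suml; apply: eq_bigr => ? _).
by rewrite -scalemxAr -scalemxAl !tensmx_mul mul1mx mulmx1.
Qed.

End TensorMap.

Section CompletePositivity.
Variable C : numClosedFieldType.

Lemma eq_CP n m (f f' : 'M[C]_n -> 'M[C]_m) : f =1 f' -> CP f -> CP f'.
Proof. by move=> ef cf k X pX; rewrite -(eq_tmap ef (frefl _)); apply: cf. Qed.

Lemma CP_kraus n m (K : 'M[C]_(m, n)) : CP (fun Y => K *m Y *m adjmx K).
Proof. by move=> k X pX; rewrite tmap_kraus_l; apply: psd_mul_adj. Qed.

Lemma CP_adj_kraus n m (K : 'M[C]_(n, m)) : CP (fun Y => adjmx K *m Y *m K).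
Proof. by apply: eq_CP (CP_kraus (adjmx K)) => Y; rewrite adjmxK. Qed.

Lemma CP_add n m (f f' : 'M[C]_n -> 'M[C]_m) :
  CP f -> CP f' -> CP (fun Y => f Y + f' Y).
Proof. by move=> cf cf' k X pX; rewrite tmapDl; apply: psdD; [apply: cf | apply: cf']. Qed.

Lemma CP_scale n m c (f : 'M[C]_n -> 'M[C]_m) : 0 <= c -> CP f -> CP (fun Y => c *: f Y).
Proof. by move=> c0 cf k X pX; rewrite tmapZl; apply: psdZ => //; apply: cf. Qed.

Lemma CP0 n m : CP (fun _ : 'M[C]_n => 0 : 'M[C]_m).
Proof.
move=> k X _; rewrite /tmap big1 => [|i _]; first exact: psd0.
rewrite big1 // => j _; rewrite big1 // => a _.
by rewrite big1 // => b _; rewrite tens0mx scaler0.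
Qed.

Lemma CP_sum n m (I : finType) (f : I -> 'M[C]_n -> 'M[C]_m) :
  (forall i, CP (f i)) -> CP (fun Y => \sum_i f i Y).
Proof.
move=> cf; rewrite unlock /=.
by elim: (index_enum I) => [|i r IHr] /=; [exact: CP0 | exact: CP_add].
Qed.

Lemma CP_comp n m l (f : 'M[C]_n -> 'M[C]_m) (g : 'M[C]_m -> 'M[C]_l) :
  linear g -> CP f -> CP g -> CP (fun Y => g (f Y)).
Proof. by move=> lg cf cg k X pX; rewrite tmap_comp //; apply/cg/cf. Qed.

(* [A (x) Z = \sum_l d_l (u_l (x) 1) Z (u_l (x) 1)^*] for a spectral decomposition
   of [A]; [K l] is [u_l (x) 1] written entrywise, since [u_l *t 1%:M] has the
   column size [1 * k], which is not convertible to [k]. *)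
Lemma CP_tensl n k (A : 'M[C]_n) : psd A -> CP (fun Z : 'M[C]_k => A *t Z).
Proof.
move=> pA; have [u [d [d0 eA]]] := psd_spectral pA.
pose K (l : 'I_n) : 'M[C]_(n * k, k) :=
  \matrix_(r, s) (u l (mxtens_unindex r).1 0 * ((mxtens_unindex r).2 == s)%:R).
apply: (@eq_CP _ _ (fun Z => \sum_l d l *: (K l *m Z *m adjmx (K l)))); last first.
  by apply: CP_sum => l; apply: CP_scale => //; exact: CP_kraus.
move=> Z; apply/matrixP => r c.
case: (mxtens_indexP r) => w i; case: (mxtens_indexP c) => w' i'.
rewrite tensmxE eA !summxE big_distrl; apply: eq_bigr => l _.
rewrite mxE mulmx_adj_entry (bigD1 i) //= [X in _ + X]big1 ?addr0; last first.
  move=> s /negbTE si; rewrite big1 // => s' _.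
  by rewrite !mxE mxtens_indexK /= (eq_sym i) si mulr0 !mul0r.
rewrite (bigD1 i') //= [X in _ + X]big1 ?addr0; last first.
  move=> s /negbTE si'.
  by rewrite !mxE !mxtens_indexK /= (eq_sym i') si' mulr0 rmorph0 mulr0.
by rewrite !mxE !mxtens_indexK /= !eqxx !mulr1 big_ord1 !mxE; ring.
Qed.

End CompletePositivity.

Section Selection.
Variable C : numClosedFieldType.

Definition selmx m n (f : 'I_m -> 'I_n) : 'M[C]_(m, n) := rowsub f 1%:M.

Lemma mul_selmx_adj m n (f : 'I_m -> 'I_n) (Y : 'M[C]_n) :
  selmx f *m Y *m adjmx (selmx f) = mxsub f f Y.
Proof.
apply/matrixP => i i'; rewrite mulmx_adj_entry mxE (bigD1 (f i)) //=.
rewrite [X in _ + X]big1 ?addr0 => [|c /negbTE fic]; last first.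
  by rewrite big1 // => c' _; rewrite !mxE eq_sym fic !mul0r.
rewrite (bigD1 (f i')) //= [X in _ + X]big1 ?addr0 => [|c /negbTE fic]; last first.
  by rewrite !mxE eq_sym fic conjC0 mulr0.
by rewrite !mxE !eqxx conjC1 mul1r mulr1.
Qed.

Lemma mxtrace_mxsub n m (f : 'I_m -> 'I_n) (Y : 'M[C]_n) :
  \tr (mxsub f f Y) = \sum_i Y (f i) (f i).
Proof. by apply: eq_bigr => i _; rewrite mxE. Qed.

Lemma selmx_unitary m n (f : 'I_m -> 'I_n) :
  injective f -> selmx f *m adjmx (selmx f) = 1%:M.
Proof.
move=> injf; have := mul_selmx_adj f 1%:M; rewrite mulmx1 => ->.
by apply/matrixP => i i'; rewrite !mxE (inj_eq injf).
Qed.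

Lemma adj_selmx_mul_entry m n (f : 'I_m -> 'I_n) (G : 'M[C]_m) r r' :
  (adjmx (selmx f) *m G *m selmx f) r r' =
  \sum_s \sum_s' ((f s == r) && (f s' == r'))%:R * G s s'.
Proof.
rewrite -{2}[selmx f]adjmxK mulmx_adj_entry; apply: eq_bigr => s _.
by apply: eq_bigr => s' _; rewrite !mxE conjCK rmorph_nat mulrAC -natrM mulnb.
Qed.

Lemma adj_selmx_mul_img m n (f : 'I_m -> 'I_n) (G : 'M[C]_m) s s' :
  injective f -> (adjmx (selmx f) *m G *m selmx f) (f s) (f s') = G s s'.
Proof.
move=> injf; rewrite adj_selmx_mul_entry (bigD1 s) //= [X in _ + X]big1 ?addr0.
  rewrite (bigD1 s') //= [X in _ + X]big1 ?addr0; first by rewrite !eqxx mul1r.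
  by move=> t /negbTE ts'; rewrite !(inj_eq injf) ts' andbF mul0r.
by move=> t /negbTE ts; rewrite big1 // => t' _; rewrite (inj_eq injf) ts mul0r.
Qed.

Lemma adj_selmx_mul_notin m n (f : 'I_m -> 'I_n) (G : 'M[C]_m) r r' :
  (forall s, f s != r) -> (adjmx (selmx f) *m G *m selmx f) r r' = 0.
Proof.
move=> fr; rewrite adj_selmx_mul_entry big1 // => s _; rewrite big1 // => s' _.
by rewrite (negbTE (fr s)) mul0r.
Qed.

End Selection.

Section Projector.
Variables (C : numClosedFieldType) (dA : nat) (phi : 'cV[C]_dA).
Notation P := (projphi phi).

Definition coprojphi : 'M[C]_dA := 1%:M - P.

Lemma projphi_adj : adjmx P = P.
Proof. by rewrite /projphi adjmxM adjmxK. Qed.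

Lemma coprojphi_adj : adjmx coprojphi = coprojphi.
Proof. by rewrite /coprojphi adjmxB adjmx1 projphi_adj. Qed.

Lemma J0_kraus s : J0 phi s = coprojphi *m s *m adjmx coprojphi.
Proof. by rewrite coprojphi_adj. Qed.

Lemma J1_delta a b : J1 phi (delta_mx a b) = ((phi a 0)^* * phi b 0) *: P.
Proof.
have -> : J1 phi (delta_mx a b) = phi *m (adjmx phi *m delta_mx a b *m phi) *m adjmx phi.
  by rewrite /J1 /projphi !mulmxA.
have -> : adjmx phi *m delta_mx a b *m phi = ((phi a 0)^* * phi b 0)%:M.
  rewrite -(@mul_delta_mx _ dA 1 dA (0 : 'I_1) a b) mulmxA -colE -mulmxA -rowE.
  by apply/matrixP => i j; rewrite !ord1 !mxE big_ord1 !mxE.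
by rewrite mul_mx_scalar -scalemxAl.
Qed.

Hypothesis phi_unit : (adjmx phi *m phi) 0 0 = 1.

Lemma adj_phi_mul : adjmx phi *m phi = 1%:M.
Proof. by apply/matrixP => i j; rewrite !ord1 phi_unit mxE eqxx. Qed.

Lemma projphi_idem : P *m P = P.
Proof. by rewrite /projphi mulmxA -(mulmxA phi) adj_phi_mul mulmx1. Qed.

Lemma coprojphi_idem : coprojphi *m coprojphi = coprojphi.
Proof. by rewrite /coprojphi mulmxBl mul1mx mulmxBr mulmx1 projphi_idem subrr subr0. Qed.

Lemma mxtrace_projphi : \tr P = 1.
Proof. by rewrite /projphi mxtrace_mulC adj_phi_mul mxtrace1. Qed.

Lemma mxtrace_J1_delta a b : \tr (J1 phi (delta_mx a b)) = (phi a 0)^* * phi b 0.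
Proof. by rewrite J1_delta mxtraceZ mxtrace_projphi mulr1. Qed.

End Projector.

Section Compression.
Variables (C : numClosedFieldType) (dW dA : nat) (phi : 'cV[C]_dA).
Notation idx := mxtens_index.
Notation P := (projphi phi).
Notation Q := (coprojphi phi).

(* The operator [(1 (x) <phi|) X (1 (x) |phi>)] on [H_W]. *)
Definition compress (X : 'M[C]_(dW * dA)) : 'M[C]_dW :=
  \matrix_(w, w') \sum_a \sum_b
     X (idx (w, a)) (idx (w', b)) * ((phi a 0)^* * phi b 0).

Lemma linear_compress : linear compress.
Proof.
move=> c X Y; apply/matrixP => w w'; rewrite !mxE mulr_sumr -big_split.
apply: eq_bigr => a _; rewrite mulr_sumr -big_split; apply: eq_bigr => b _.
by rewrite !mxE /=; ring.
Qed.

Lemma compress_sum_delta X :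
  compress X = \sum_(i < dW) \sum_(j < dW) \sum_(a < dA) \sum_(b < dA)
     (X (idx (i, a)) (idx (j, b)) * ((phi a 0)^* * phi b 0)) *: delta_mx i j.
Proof.
rewrite {1}(matrix_sum_delta (compress X)); apply: eq_bigr => i _.
by apply: eq_bigr => j _; rewrite mxE scaler_suml; apply: eq_bigr => a _; rewrite scaler_suml.
Qed.

Lemma tmap_J1 X : tmap (@idmap C dW) (J1 phi) X = compress X *t P.
Proof.
rewrite /tmap compress_sum_delta; do 4! (rewrite tensmx_suml; apply: eq_bigr => ? _).
by rewrite J1_delta tensmxZl tensmxZr scalerA.
Qed.

Lemma tmap_J0 X : tmap (@idmap C dW) (J0 phi) X = (1%:M *t Q) *m X *m adjmx (1%:M *t Q).
Proof. by rewrite -tmap_kraus_r; apply: eq_tmap => // Y; rewrite J0_kraus. Qed.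

Hypothesis phi_unit : (adjmx phi *m phi) 0 0 = 1.

Lemma tmap_scal_J1 m (N : 'M[C]_dW -> 'M[C]_m) X : linear N ->
  tmap_scal N (fun s => \tr (J1 phi s)) X = N (compress X).
Proof.
move=> lN; rewrite /tmap_scal compress_sum_delta.
do 4! (rewrite (lin_sum lN); apply: eq_bigr => ? _).
by rewrite (linZ lN) mxtrace_J1_delta // scalerA.
Qed.

Lemma mxtrace_compress X : \tr (compress X) = \tr ((1%:M *t P) *m X).
Proof.
rewrite /mxtrace sum_mxtens_index; apply: eq_bigr => w _; rewrite mxE exchange_big.
apply: eq_bigr => b _; rewrite mxE sum_mxtens_index (bigD1 w) //= [X in _ + X]big1 ?addr0.
  by apply: eq_bigr => a _; rewrite tensmxE !mxE eqxx mul1r big_ord1 !mxE; ring.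
by move=> w' /negbTE w'w; rewrite big1 // => a _; rewrite tensmxE mxE eq_sym w'w !mul0r.
Qed.

Lemma mxtrace_compress_J0 X :
  \tr (compress X) + \tr (tmap (@idmap C dW) (J0 phi) X) = \tr X.
Proof.
rewrite tmap_J0 mxtrace_mulC mulmxA adjmx_tens adjmx1 coprojphi_adj tensmx_mul mul1mx.
rewrite coprojphi_idem // /coprojphi tensmxBr tensmx11 mulmxBl mul1mx raddfB /=.
by rewrite mxtrace_compress addrC subrK.
Qed.

End Compression.

Section CompressionKraus.
Variables (C : numClosedFieldType) (dW dA k : nat) (phi : 'cV[C]_dA).
Notation idx := mxtens_index.

Definition compress_kraus : 'M[C]_(dW * k.+1, dW * dA) :=
  \matrix_(r, c) ((((mxtens_unindex r).2 == ord0) &&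
                   ((mxtens_unindex c).1 == (mxtens_unindex r).1))%:R
                  * (phi (mxtens_unindex c).2 0)^*).

Lemma compress_krausE w i v a :
  compress_kraus (idx (w, i)) (idx (v, a)) = ((i == ord0) && (v == w))%:R * (phi a 0)^*.
Proof. by rewrite mxE !mxtens_indexK. Qed.

Lemma compress_kraus_conj X :
  compress_kraus *m X *m adjmx compress_kraus =
  compress phi X *t (delta_mx ord0 ord0 : 'M[C]_k.+1).
Proof.
apply/matrixP => r r'; case: (mxtens_indexP r) => w i; case: (mxtens_indexP r') => w' i'.
rewrite mulmx_adj_entry tensmxE !mxE sum_mxtens_index.
have [-> | i0] := eqVneq i ord0; last first.
  rewrite mulr0 big1 // => v _; rewrite big1 // => a _; rewrite big1 // => c' _.
  by rewrite compress_krausE (negbTE i0) !mul0r.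
have [-> | i'0] := eqVneq i' ord0; last first.
  rewrite andbF mulr0 big1 // => v _; rewrite big1 // => a _; rewrite big1 // => c' _.
  case: (mxtens_indexP c') => v' b.
  by rewrite !compress_krausE (negbTE i'0) mul0r conjC0 mulr0.
rewrite /= mulr1 (bigD1 w) //= [X in _ + X]big1 ?addr0; last first.
  move=> v /negbTE vw; rewrite big1 // => a _; rewrite big1 // => c' _.
  by rewrite compress_krausE vw !mul0r.
apply: eq_bigr => a _; rewrite sum_mxtens_index (bigD1 w') //= [X in _ + X]big1 ?addr0.
  by apply: eq_bigr => b _; rewrite !compress_krausE !eqxx !mul1r conjCK; ring.
move=> v /negbTE vw'; rewrite big1 // => b _.
by rewrite !compress_krausE vw' mul0r conjC0 mulr0.
Qed.

End CompressionKraus.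

Section Realization.
Variables (C : numClosedFieldType) (dW dA dY : nat) (phi : 'cV[C]_dA).
Hypothesis phi_unit : (adjmx phi *m phi) 0 0 = 1.
Variables (Gamma : 'M[C]_(dW * dA) -> 'M[C]_dY) (tau : 'M[C]_dW).
Hypotheses (Gamma_channel : channel Gamma) (tau_density : density tau).
Notation idx := mxtens_index.
Notation n := (dW * dA)%N.

(* The ancilla is [C + H_W (x) H_A], of dimension [n.+1]: slot [0] carries the
   [J1] branch and the remaining slots carry the [J0] branch. *)
Definition anc_lift : 'I_n -> 'I_n.+1 := lift ord0.

Definition embed_J0 (X : 'M[C]_n) : 'M[C]_n.+1 :=
  adjmx (selmx C anc_lift) *m tmap (@idmap C dW) (J0 phi) X *m selmx C anc_lift.

Definition Epre (X : 'M[C]_n) : 'M[C]_(dW * n.+1) :=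
  compress phi X *t delta_mx ord0 ord0 + tau *t embed_J0 X.

Definition Epost (Y : 'M[C]_(dY * n.+1)) : 'M[C]_dY :=
  mxsub (fun y => idx (y, ord0)) (fun y => idx (y, ord0)) Y +
  Gamma (\sum_y mxsub (fun s => idx (y, anc_lift s)) (fun s => idx (y, anc_lift s)) Y).

Let lGamma : linear Gamma. Proof. by case: Gamma_channel. Qed.

Lemma linear_embed_J0 : linear embed_J0.
Proof. by move=> c X Y; rewrite /embed_J0 linear_tmap linear_mulmx_lr. Qed.

Lemma CP_embed_J0 : CP embed_J0.
Proof.
apply: (CP_comp (linear_mulmx_lr _ _) _ (CP_adj_kraus (selmx C anc_lift))).
by apply: eq_CP (CP_kraus (1%:M *t coprojphi phi)) => X; rewrite tmap_J0.
Qed.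

Lemma mxtrace_embed_J0 X : \tr (embed_J0 X) = \tr (tmap (@idmap C dW) (J0 phi) X).
Proof.
by rewrite /embed_J0 mxtrace_mulC mulmxA selmx_unitary ?mul1mx //; exact: lift_inj.
Qed.

Lemma channel_Epre : channel Epre.
Proof.
have [tau_psd tau_tr] := tau_density.
split; [|split].
- move=> c X Y; rewrite /Epre linear_embed_J0 linear_compress.
  by rewrite tensmxDl tensmxZl tensmxDr tensmxZr scalerDr addrACA.
- apply: CP_add; last first.
    apply: (CP_comp _ CP_embed_J0 (CP_tensl tau_psd)) => c X Y.
    by rewrite tensmxDr tensmxZr.
  by apply: eq_CP (CP_kraus (compress_kraus dW n phi)) => X; rewrite compress_kraus_conj.
- move=> X; rewrite /Epre mxtraceD !mxtrace_tens tau_tr mul1r mxtrace_embed_J0.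
  rewrite [X in _ * X]/mxtrace (bigD1 ord0) //= big1 ?addr0; last first.
    by move=> i /negbTE i0; rewrite mxE i0.
  by rewrite mxE !eqxx mulr1; exact: mxtrace_compress_J0.
Qed.

Lemma channel_Epost : channel Epost.
Proof.
have [_ [CP_Gamma TP_Gamma]] := Gamma_channel.
split; [|split].
- move=> c Y Y'; rewrite /Epost.
  have sub_lin f : mxsub f f (c *: Y + Y') = c *: mxsub f f Y + mxsub f f Y'.
    by apply/matrixP => i j; rewrite !mxE.
  rewrite sub_lin (eq_bigr _ (fun y _ => sub_lin _ _)) big_split /= -scaler_sumr.
  by rewrite (linD lGamma) (linZ lGamma) scalerDr addrACA.
- apply: eq_CP => [Y|].
    by rewrite /Epost -!mul_selmx_adj; under eq_bigr do rewrite -mul_selmx_adj.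
  apply: CP_add; first exact: CP_kraus.
  by apply: CP_comp lGamma (CP_sum (fun y => CP_kraus _)) CP_Gamma.
- move=> Y; rewrite /Epost mxtraceD TP_Gamma raddf_sum /= mxtrace_mxsub.
  under eq_bigr do rewrite mxtrace_mxsub.
  rewrite [RHS]/mxtrace sum_mxtens_index -big_split; apply: eq_bigr => y _.
  by rewrite big_ord_recl.
Qed.

Lemma Rsuper_Epre_Epost (N : 'M[C]_dW -> 'M[C]_dY) X : linear N ->
  Rsuper phi Gamma tau N X = Epost (tmap N (@idmap C n.+1) (Epre X)).
Proof.
move=> lN; rewrite /Epre (linD (linear_tmap _ _)) !tmap_tens //.
have lift_neq0 (s : 'I_n) : (anc_lift s == ord0) = false by apply/negbTE; rewrite eq_sym neq_lift.
rewrite /Epost /Rsuper tmap_scal_J1 //; congr (_ + _).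
  apply/matrixP => y y'; rewrite [RHS]mxE [RHS]mxE !tensmxE [delta_mx _ _ _ _]mxE eqxx mulr1.
  by rewrite adj_selmx_mul_notin ?mulr0 ?addr0 // => s; rewrite lift_neq0.
rewrite -(linZ lGamma); congr (Gamma _); apply/matrixP => s s'.
rewrite summxE mxE /mxtrace big_distrl; apply: eq_bigr => y _.
rewrite [in RHS]mxE [in RHS]mxE !tensmxE [delta_mx _ _ _ _]mxE !lift_neq0 /=.
rewrite mulr0 add0r; congr (_ * _).
by rewrite adj_selmx_mul_img //; exact: lift_inj.
Qed.

Lemma Rsuper_S3 X :
  Rsuper phi Gamma tau (S3 phi Gamma) X = Gamma (tmap (@idmap C dW) (Jmap phi) X).
Proof.
have lS3 : linear (S3 phi Gamma).
  by move=> c Y Y'; rewrite /S3 tensmxDl tensmxZl (linD lGamma) (linZ lGamma).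
have [_ tau_tr] := tau_density; have [_ [_ TP_Gamma]] := Gamma_channel.
rewrite /Rsuper tmap_scal_J1 // {1}/S3 -tmap_J1 /S3 TP_Gamma mxtrace_tens.
by rewrite mxtrace_projphi // mulr1 tau_tr scale1r -(linD lGamma) -tmapDr.
Qed.

End Realization.

Theorem mainTheorem2 (C : numClosedFieldType) (dW dA dY : nat)
  (phi : 'cV[C]_dA) (hphi : (adjmx phi *m phi) 0 0 = 1)
  (Gamma : 'M[C]_(dW * dA) -> 'M[C]_dY) (hGamma : channel Gamma)
  (tau : 'M[C]_dW) (htau : density tau) :
  superchannel (Rsuper phi Gamma tau) /\
  ((fun X => Gamma (tmap (@idmap C dW) (Jmap phi) X)) = Gamma ->
     Rsuper phi Gamma tau (S3 phi Gamma) = Gamma).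
Proof.
split.
  exists (dW * dA).+1, (Epre phi tau), (Epost Gamma); split.
  - exact: channel_Epre.
  - exact: channel_Epost.
  - by move=> N lN X; apply: Rsuper_Epre_Epost.
move=> GammaJ; apply: functional_extensionality => X.
by rewrite Rsuper_S3 //; apply: (congr1 (fun f => f X) GammaJ).
Qed.
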